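(* Let $\alpha>0$. The constraints of the optimization problem below (namely $Q>0$, $U>0$, $\Delta(Q)<0$, $\mathrm{He}\begin{bmatrix}\alpha Q+AQ+BW & B(X-U)\\ W+Y & X-U\end{bmatrix}<0$ and $\begin{bmatrix}\bar u^2 & Y\\ Y^\top & Q\end{bmatrix}\geq 0$) are feasible if and only if $\alpha>\omega$.
   Context: Let $g>0$ (gravity acceleration), $z_c>0$ (constant center-of-mass height) and $\omega:=\sqrt{g/z_c}$. Let $A:=\begin{bmatrix}0&1\\ \omega^2&0\end{bmatrix}$ and $B:=\begin{bmatrix}0\\ -\omega^2\end{bmatrix}$ (linear inverted pendulum dynamics $\dot x=Ax+Bu$). Let $\bar r>0$ (half-step size), $\bar v>0$ (peak forward speed) and $T>0$ (step period) be related by $\bar v=\omega\bar r\,\frac{\cosh(\omega T)+1}{\sinh(\omega T)}$, equivalently $T=\frac1\omega\ln\!\big(\frac{\bar v/\omega+\bar r}{\bar v/\omega-\bar r}\big)$; in particular $\bar v/\omega-\bar r>0$. Define $\xi:=\frac{\bar r\omega}{\bar v/\omega-\bar r}>0$, and let $\bar u>0$ (saturation level, half of the foot length). For $M$ square, $\mathrm{He}(M):=M+M^\top$. Consider the convex problem: maximize $\log\det(Q)$ over a symmetric $Q=\begin{bmatrix}q_{11}&q_{12}\\ q_{12}&q_{22}\end{bmatrix}\in\mathbb R^{2\times2}$, row vectors $W,Y\in\mathbb R^{1\times 2}$ and scalars $U,X\in\mathbb R$, subject to $Q>0$, $U>0$, $\Delta(Q)<0$, $\mathrm{He}\begin{bmatrix}\alpha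 Q+AQ+BW & B(X-U)\\ W+Y & X-U\end{bmatrix}<0$, $\begin{bmatrix}\bar u^2 & Y\\ Y^\top & Q\end{bmatrix}\geq0$, where $\Delta(Q):=\begin{bmatrix}\Delta_{11}&\Delta_{12}\\ \Delta_{12}&\Delta_{22}\end{bmatrix}$ with $\Delta_{11}:=(\mathrm{e}^{2(\omega-\alpha)T}-1)q_{22}+4\mathrm{e}^{-2\alpha T}\xi(\xi q_{11}-\mathrm{e}^{\omega T}q_{12})$, $\Delta_{12}:=2\mathrm{e}^{-2\alpha T}\xi q_{11}+(\mathrm{e}^{-(\omega+2\alpha)T}-1)q_{12}$, $\Delta_{22}:=(\mathrm{e}^{-2\alpha T}-1)q_{11}$. *)

From HB Require Import structures.
From mathcomp Require Import all_boot all_order all_algebra.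
From mathcomp Require Import reals.
From mathcomp Require Import sequences exp.
Set Implicit Arguments. Unset Strict Implicit. Unset Printing Implicit Defensive.
Import Order.TTheory GRing.Theory Num.Theory.
Local Open Scope ring_scope.

Section Defs.
Variable R : realType.

(* Definiteness of square matrices via the quadratic form x^T M x. All matrices
   to which these are applied are symmetric by construction. *)
Definition posdef n (M : 'M[R]_n) : Prop :=
  forall x : 'cV[R]_n, x != 0 -> 0 < (x^T *m M *m x) 0 0.
Definition negdef n (M : 'M[R]_n) : Prop :=
  forall x : 'cV[R]_n, x != 0 -> (x^T *m M *m x) 0 0 < 0.
Definition psd n (M : 'M[R]_n) : Prop :=
  forall x : 'cV[R]_n, 0 <= (x^T *m M *m x) 0 0.

Definition He n (M : 'M[R]_n) : 'M[R]_n := M + M^T.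

Definition mx2 (a b c d : R) : 'M[R]_2 :=
  \matrix_(i, j) if (i : nat) == 0%N then (if (j : nat) == 0%N then a else b)
                 else (if (j : nat) == 0%N then c else d).

Definition omega (g zc : R) : R := Num.sqrt (g / zc).

Definition Amat (w : R) : 'M[R]_2 := mx2 0 1 (w ^+ 2) 0.
Definition Bmat (w : R) : 'cV[R]_2 := \col_i (if (i : nat) == 0%N then 0 else - w ^+ 2).

Definition xi (w rbar vbar : R) : R := rbar * w / (vbar / w - rbar).

Definition Delta (w alpha T xi : R) (q11 q12 q22 : R) : 'M[R]_2 :=
  let d11 := (expR (2 * (w - alpha) * T) - 1) * q22
             + 4 * expR (- (2 * alpha * T)) * xi * (xi * q11 - expR (w * T) * q12) in
  let d12 := 2 * expR (- (2 * alpha * T)) * xi * q11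
             + (expR (- ((w + 2 * alpha) * T)) - 1) * q12 in
  let d22 := (expR (- (2 * alpha * T)) - 1) * q11 in
  mx2 d11 d12 d12 d22.

Definition feasible (g zc rbar vbar T ubar alpha : R) : Prop :=
  let w := omega g zc in
  let A := Amat w in
  let B := Bmat w in
  exists (q11 q12 q22 : R) (W Y : 'rV[R]_2) (U X : R),
    let Q := mx2 q11 q12 q12 q22 in
    [/\ posdef Q,
        0 < U,
        negdef (Delta w alpha T (xi w rbar vbar) q11 q12 q22),
        negdef (He (block_mx (alpha *: Q + A *m Q + B *m W) (B *m (X - U)%:M)
                             (W + Y) ((X - U)%:M : 'M[R]_1)))
      & psd (block_mx ((ubar ^+ 2)%:M : 'M[R]_1) Y Y^T Q)].

End Defs.

(* Q > 0 gives q11, q22 > 0, and the (1,1) entry of the He-constraint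
   gives alpha q11 + q12 < 0, hence q12 < 0.  If alpha <= omega then
   e^(2(omega-alpha)T) >= 1, so in
     Delta11 = (e^(2(omega-alpha)T) - 1) q22 + 4 e^(-2 alpha T) xi (xi q11 - e^(omega T) q12)
   both terms are nonnegative and the second is positive, contradicting Delta(Q) < 0.

   For alpha > omega take Q = s [1, -m; -m, q] with m = alpha + 1,
   X - U = -s, and W, Y supported on the second coordinate with W + Y = -(B (X - U))^T.
   The He-constraint then splits into the blocks He((alpha I + A) Q + B W) and -2s;
   the first has (1,1) entry -2s, and the second entry of W makes its (2,2) entry as
   negative as needed.  Since e^(2(omega-alpha)T) < 1, Delta11 -> -oo as q grows, so a
   large q gives Delta(Q) < 0.  All constraints except the saturation one are
   homogeneous in s, and a Schur complement shows that the saturation constraint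
   holds once s is small. *)

From mathcomp Require Import all_boot all_order all_algebra.
From mathcomp Require Import reals.
From mathcomp Require Import sequences exp.
From mathcomp Require Import ring lra.
Set Implicit Arguments. Unset Strict Implicit. Unset Printing Implicit Defensive.
Import Order.TTheory GRing.Theory Num.Theory.
Local Open Scope ring_scope.

Section QuadraticForms.
Variable R : realType.

Definition qform n (M : 'M[R]_n) (x : 'cV[R]_n) : R := (x^T *m M *m x) 0 0.

Lemma qform0 n (M : 'M[R]_n) : qform M 0 = 0.
Proof. by rewrite /qform mulmx0 mxE. Qed.

Lemma qform_delta n (M : 'M[R]_n.+1) i : qform M (delta_mx i 0) = M i i.
Proof. by rewrite /qform trmx_delta -rowE -colE !mxE. Qed.

Lemma qform_block n1 n2 (P : 'M[R]_n1) (B : 'M_(n1, n2)) (C : 'M_(n2, n1))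
    (S : 'M_n2) x1 x2 :
  qform (block_mx P B C S) (col_mx x1 x2) =
  qform P x1 + (x1^T *m B *m x2) 0 0 + (x2^T *m C *m x1) 0 0 + qform S x2.
Proof.
rewrite /qform tr_col_mx mul_row_block mul_row_col !mulmxDl !mxE.
by rewrite addrACA !addrA.
Qed.

Lemma qform_scalar1 (k : R) (x : 'cV[R]_1) : qform k%:M x = k * x 0 0 ^+ 2.
Proof. by rewrite /qform mul_mx_scalar -scalemxAl mxE mxE big_ord1 mxE expr2. Qed.

Lemma qform_mx2 (a b c d : R) x :
  qform (mx2 a b c d) x = x 0 0 * (a * x 0 0 + b * x 1 0) + x 1 0 * (c * x 0 0 + d * x 1 0).
Proof.
rewrite /qform !mxE !big_ord_recl !big_ord0 !mxE !big_ord_recl !big_ord0 !mxE /=.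
have -> : lift ord0 ord0 = 1 :> 'I_2 by apply/val_inj.
have -> : ord0 = 0 :> 'I_2 by apply/val_inj.
ring.
Qed.

Lemma qformB n (M N : 'M[R]_n) x : qform (M - N) x = qform M x - qform N x.
Proof. by rewrite /qform mulmxBr mulmxBl !mxE. Qed.

Lemma qformZ n k (M : 'M[R]_n) x : qform (k *: M) x = k * qform M x.
Proof. by rewrite /qform -scalemxAr -scalemxAl !mxE. Qed.

Lemma qform_gram n (Y : 'rV[R]_n) v : qform (Y^T *m Y) v = (Y *m v) 0 0 ^+ 2.
Proof.
by rewrite /qform mulmxA -trmx_mul -mulmxA [LHS]mxE big_ord1 [(Y *m v)^T 0 0]mxE expr2.
Qed.

Lemma cV2_eq0 (x : 'cV[R]_2) : (x == 0) = (x 0 0 == 0) && (x 1 0 == 0).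
Proof.
apply/eqP/andP => [-> | [/eqP x0 /eqP x1]]; first by rewrite !mxE.
apply/matrixP => i j; rewrite !mxE (ord1 j).
by case: i => [[|[|//]] ?]; [rewrite -x0 | rewrite -x1]; congr (x _ _); apply/val_inj.
Qed.

Lemma posdef_mx2 (p r t : R) : 0 < p -> r ^+ 2 < p * t -> posdef (mx2 p r r t).
Proof.
move=> p_gt0 det_gt0 x; rewrite cV2_eq0 negb_and -/(qform _ x) qform_mx2.
set a := x 0 0; set b := x 1 0 => ab_neq0.
rewrite -(pmulr_rgt0 _ p_gt0).
have -> : p * (a * (p * a + r * b) + b * (r * a + t * b)) =
          (p * a + r * b) ^+ 2 + (p * t - r ^+ 2) * b ^+ 2 by ring.
have [b0 | b_neq0] := eqVneq b 0.
  rewrite b0 eqxx orbF in ab_neq0.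
  by rewrite b0 !(mulr0, addr0, expr0n) /= exprn_even_gt0 // mulf_neq0 // gt_eqF.
apply: ltr_wpDl; first exact: sqr_ge0.
by rewrite mulr_gt0 ?subr_gt0 // exprn_even_gt0.
Qed.

Lemma negdef_mx2 (p r t : R) : t < 0 -> r ^+ 2 < p * t -> negdef (mx2 p r r t).
Proof.
move=> t_lt0 det_gt0.
have p_lt0 : p < 0 by nra.
have posN : posdef (mx2 (- p) (- r) (- r) (- t)).
  by apply: posdef_mx2; rewrite ?sqrrN ?mulrNN ?oppr_gt0.
move=> x /posN; rewrite -!/(qform _ x) !qform_mx2; lra.
Qed.

Lemma delta_mx_neq0 m n (i : 'I_m) (j : 'I_n) : delta_mx i j != 0 :> 'M[R]_(m, n).
Proof. by apply/eqP => /matrixP/(_ i j); rewrite !mxE !eqxx => /eqP; rewrite oner_eq0. Qed.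

Lemma posdef_diag_gt0 n (M : 'M[R]_n.+1) i : posdef M -> 0 < M i i.
Proof. by move=> /(_ _ (delta_mx_neq0 i 0)); rewrite -/(qform _ _) qform_delta. Qed.

Lemma negdef_diag_lt0 n (M : 'M[R]_n.+1) i : negdef M -> M i i < 0.
Proof. by move=> /(_ _ (delta_mx_neq0 i 0)); rewrite -/(qform _ _) qform_delta. Qed.

Lemma negdef_qform_le0 n (M : 'M[R]_n) x : negdef M -> qform M x <= 0.
Proof.
by move=> negM; have [->|/negM/ltW//] := eqVneq x 0; rewrite qform0.
Qed.

Lemma posdef_psd n (M : 'M[R]_n) : posdef M -> psd M.
Proof.
by move=> posM x; have [->|/posM/ltW//] := eqVneq x 0; rewrite -/(qform _ _) qform0.
Qed.

Lemma negdef_scalar1 (k : R) : k < 0 -> negdef (k%:M : 'M[R]_1).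
Proof.
move=> k_lt0 x x_neq0; rewrite -/(qform _ _) qform_scalar1 nmulr_rlt0 //.
rewrite exprn_even_gt0 //; apply: contraNneq x_neq0 => x0.
by rewrite [x]mx11_scalar x0 raddf0.
Qed.

Lemma negdef_ulsub n1 n2 (P : 'M[R]_n1) (B : 'M_(n1, n2)) C (S : 'M_n2) :
  negdef (block_mx P B C S) -> negdef P.
Proof.
move=> negM x x_neq0; rewrite -/(qform _ _); have := negM (col_mx x 0).
rewrite col_mx_eq0 negb_and x_neq0 -/(qform _ _) qform_block => /(_ isT).
by rewrite !mulmx0 trmx0 !mul0mx qform0 !mxE !addr0.
Qed.

Lemma negdef_block_diag n1 n2 (P : 'M[R]_n1) (S : 'M[R]_n2) :
  negdef P -> negdef S -> negdef (block_mx P 0 0 S).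
Proof.
move=> negP negS x; rewrite -[x]vsubmxK col_mx_eq0 negb_and -/(qform _ _) qform_block.
rewrite !mulmx0 !mul0mx !mxE !addr0.
have [-> | x1_neq0 _] := eqVneq (usubmx x) 0.
  by rewrite qform0 add0r; exact: negS.
by rewrite ltr_wnDr ?negdef_qform_le0 //; exact: negP.
Qed.

Lemma psd_block_schur n (c : R) (Y : 'rV[R]_n) (S : 'M[R]_n) :
  0 < c -> psd (S - c^-1 *: (Y^T *m Y)) -> psd (block_mx c%:M Y Y^T S).
Proof.
move=> c_gt0 psdS x; rewrite -[x]vsubmxK -/(qform _ _) qform_block qform_scalar1.
set z := usubmx x; set v := dsubmx x.
have := psdS v; rewrite -/(qform _ _) qformB qformZ qform_gram.
have -> : (z^T *m Y *m v) 0 0 = z 0 0 * (Y *m v) 0 0.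
  by rewrite -mulmxA [LHS]mxE big_ord1 [z^T 0 0]mxE.
have -> : (v^T *m Y^T *m z) 0 0 = (Y *m v) 0 0 * z 0 0.
  by rewrite -trmx_mul [LHS]mxE big_ord1 [_^T 0 0]mxE.
move: (z 0 0) ((Y *m v) 0 0) (qform S v) => a b s schur_ge0.
have -> : c * a ^+ 2 + a * b + b * a + s = c^-1 * (c * a + b) ^+ 2 + (s - c^-1 * b ^+ 2).
  by field; rewrite gt_eqF.
by rewrite addr_ge0 // mulr_ge0 ?sqr_ge0 // invr_ge0 ltW.
Qed.

Lemma mx2_eta (M : 'M[R]_2) : M = mx2 (M 0 0) (M 0 1) (M 1 0) (M 1 1).
Proof.
by apply/matrixP => -[[|[|//]] ?] [[|[|//]] ?]; rewrite mxE /=; congr (M _ _); apply/val_inj.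
Qed.

Lemma He_block_mx m n (A : 'M[R]_m) B C (D : 'M[R]_n) :
  He (block_mx A B C D) = block_mx (He A) (B + C^T) (C + B^T) (He D).
Proof. by rewrite /He tr_block_mx add_block_mx. Qed.

Lemma He_scalar n (k : R) : He (k%:M : 'M[R]_n) = (k + k)%:M.
Proof. by rewrite /He tr_scalar_mx raddfD. Qed.

Lemma He_mx2 (a b c d : R) : He (mx2 a b c d) = mx2 (a + a) (b + c) (b + c) (d + d).
Proof. by rewrite [LHS]mx2_eta !mxE /= [c + b]addrC. Qed.

Lemma negdef_He_block m n (A : 'M[R]_m) B C (D : 'M[R]_n) :
  B + C^T = 0 -> negdef (He A) -> negdef (He D) -> negdef (He (block_mx A B C D)).
Proof.
move=> BC0 negA negD; rewrite He_block_mx BC0.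
have -> : C + B^T = 0 by rewrite -[C]trmxK -linearD /= addrC BC0 trmx0.
exact: negdef_block_diag.
Qed.

End QuadraticForms.

Section LinearInvertedPendulum.
Variable R : realType.

Definition row2 (u v : R) : 'rV[R]_2 := \row_j (if (j : nat) == 0%N then u else v).

Lemma closed_loop_mx2 (w alpha q11 q12 q22 : R) (W : 'rV[R]_2) :
  let Q := mx2 q11 q12 q12 q22 in
  alpha *: Q + Amat w *m Q + Bmat w *m W =
  mx2 (alpha * q11 + q12) (alpha * q12 + q22)
      (w ^+ 2 * q11 + alpha * q12 - w ^+ 2 * W 0 0)
      (w ^+ 2 * q12 + alpha * q22 - w ^+ 2 * W 0 1).
Proof.
rewrite /= [LHS]mx2_eta !mxE !big_ord_recl !big_ord0 !mxE /=.
by congr mx2; ring.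
Qed.

Lemma xi_gt0 (w rbar vbar T : R) : 0 < w -> 0 < rbar -> 0 < T ->
  vbar = w * rbar * ((expR (w * T) + expR (- (w * T))) / 2 + 1) /
         ((expR (w * T) - expR (- (w * T))) / 2) ->
  0 < xi w rbar vbar.
Proof.
move=> w_gt0 rbar_gt0 T_gt0 ->; rewrite expRN /xi.
have E_gt1 : 1 < expR (w * T) by rewrite expR_gt1 mulr_gt0.
move: (expR (w * T)) E_gt1 => E E_gt1.
have Einv_lt1 : E^-1 < 1 by rewrite invf_lt1 // (lt_trans ltr01).
have Einv_gt0 : 0 < E^-1 by rewrite invr_gt0 (lt_trans ltr01).
have -> : w * rbar * ((E + E^-1) / 2 + 1) / ((E - E^-1) / 2) / w - rbar =
          rbar * (E^-1 + 1) / ((E - E^-1) / 2).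
  by field; apply/and3P; split; rewrite gt_eqF //; nra.
apply: divr_gt0; first exact: mulr_gt0.
by apply: divr_gt0; [apply: mulr_gt0 => //; lra | lra].
Qed.

Lemma Delta11_gt0 (w alpha T x q11 q12 q22 : R) : alpha <= w -> 0 < T -> 0 < x ->
  0 < q11 -> 0 <= q22 -> q12 < 0 -> 0 < Delta w alpha T x q11 q12 q22 0 0.
Proof.
move=> le_alpha_w T_gt0 x_gt0 q11_gt0 q22_ge0 q12_lt0; rewrite mxE /=.
have b_ge1 : 1 <= expR (2 * (w - alpha) * T).
  by rewrite leNgt expR_lt1 -leNgt !mulr_ge0 ?subr_ge0 // ltW.
apply: ltr_wpDl; first by rewrite mulr_ge0 ?subr_ge0.
rewrite !mulr_gt0 ?expR_gt0 // subr_gt0 (lt_trans _ (mulr_gt0 x_gt0 q11_gt0)) //.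
by rewrite pmulr_rlt0 ?expR_gt0.
Qed.

Lemma lt_alpha_of_lmi (w alpha T x q11 q12 q22 : R) (W : 'rV[R]_2) B C (D : 'M[R]_1) :
  let Q := mx2 q11 q12 q12 q22 in
  0 < alpha -> 0 < T -> 0 < x -> posdef Q -> negdef (Delta w alpha T x q11 q12 q22) ->
  negdef (He (block_mx (alpha *: Q + Amat w *m Q + Bmat w *m W) B C D)) -> w < alpha.
Proof.
move=> Q alpha_gt0 T_gt0 x_gt0 posQ /(negdef_diag_lt0 0) Delta11_lt0.
rewrite He_block_mx => /negdef_ulsub; rewrite closed_loop_mx2 He_mx2.
move=> /(negdef_diag_lt0 0); rewrite mxE /= => cl_lt0.
have := posdef_diag_gt0 0 posQ; have := posdef_diag_gt0 1 posQ; rewrite !mxE /=.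
move=> q22_gt0 q11_gt0; rewrite ltNge; apply: contraTN Delta11_lt0 => le_alpha_w.
rewrite -leNgt; apply/ltW/Delta11_gt0 => //; [exact: ltW | nra].
Qed.

End LinearInvertedPendulum.

Section Certificate.
Variables (R : realType) (w alpha T x ubar : R).
Hypotheses (w_gt0 : 0 < w) (w_lt_alpha : w < alpha) (T_gt0 : 0 < T) (x_gt0 : 0 < x)
  (ubar_gt0 : 0 < ubar).

Local Notation a := (expR (- (2 * alpha * T))).
Local Notation b := (expR (2 * (w - alpha) * T)).
Local Notation c := (expR (- ((w + 2 * alpha) * T))).
Local Notation E := (expR (w * T)).
Local Notation m := (alpha + 1).

(* cert_q makes Delta11 < 0 and leaves room for the saturation constraint; cert_W
   makes the (2,2) entry of the closed-loop block -s (cert_e^2 + 1) / 2, where s cert_e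
   is its off-diagonal entry; cert_Y makes W + Y cancel B (X - U). *)
Definition cert_K := 4 * a * x * (x + E * m).
Definition cert_D := 2 * a * x + (1 - c) * m.
Definition cert_q := m ^+ 2 + 1 + (cert_K + cert_D ^+ 2 / (1 - a)) / (1 - b).
Definition cert_e := cert_q + w ^+ 2 - 2 * alpha * m.
Definition cert_W := (alpha * cert_q - w ^+ 2 * m + (cert_e ^+ 2 + 1) / 2) / w ^+ 2.
Definition cert_Y := - w ^+ 2 - cert_W.
Definition cert_s := ubar ^+ 2 / (cert_Y ^+ 2 + 1).

Local Notation s := cert_s.
Local Notation Q := (mx2 s (- (s * m)) (- (s * m)) (s * cert_q)).

Let alpha_gt0 : 0 < alpha. Proof. exact: lt_trans w_lt_alpha. Qed.

Let a_lt1 : a < 1.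
Proof. by rewrite expR_lt1 oppr_lt0 !mulr_gt0. Qed.

Let b_lt1 : b < 1.
Proof. by rewrite expR_lt1 pmulr_llt0 // pmulr_rlt0 // subr_lt0. Qed.

Lemma cert_s_gt0 : 0 < s.
Proof. by rewrite divr_gt0 ?exprn_gt0 // ltr_wpDl ?sqr_ge0. Qed.

Let q_ge : m ^+ 2 + 1 <= cert_q.
Proof.
have K_ge0 : 0 <= cert_K.
  by rewrite /cert_K !mulr_ge0 ?expR_ge0 ?ltW // addr_gt0 // mulr_gt0 ?expR_gt0 // addr_gt0.
have D_ge0 : 0 <= cert_D ^+ 2 / (1 - a) by rewrite divr_ge0 ?sqr_ge0 // subr_ge0 ltW.
by rewrite /cert_q lerDl; apply: divr_ge0; [exact: addr_ge0 | rewrite subr_ge0 ltW].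
Qed.

Lemma cert_Q_posdef : posdef Q.
Proof.
apply: posdef_mx2; first exact: cert_s_gt0.
rewrite sqrrN exprMn expr2 -mulrA ltr_pM2l ?cert_s_gt0 //.
by rewrite ltr_pM2l ?cert_s_gt0 // (lt_le_trans _ q_ge) // ltrDl.
Qed.

Lemma cert_Delta_negdef : negdef (Delta w alpha T x s (- (s * m)) (s * cert_q)).
Proof.
have det : (cert_K - (1 - b) * cert_q) * (a - 1) =
           cert_D ^+ 2 + (1 - a) * (1 - b) * (m ^+ 2 + 1).
  by rewrite /cert_q; field; rewrite !gt_eqF // !subr_gt0.
rewrite /Delta; apply: negdef_mx2; first by rewrite nmulr_rlt0 ?cert_s_gt0 // subr_lt0.
have -> : 2 * a * x * s + (c - 1) * - (s * m) = s * cert_D by rewrite /cert_D; ring.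
have -> : ((b - 1) * (s * cert_q) + 4 * a * x * (x * s - E * - (s * m))) * ((a - 1) * s) =
          s ^+ 2 * ((cert_K - (1 - b) * cert_q) * (a - 1)) by rewrite /cert_K; ring.
rewrite det exprMn ltr_pM2l ?exprn_gt0 ?cert_s_gt0 // ltrDl.
by rewrite !mulr_gt0 ?subr_gt0 // ltr_wpDl ?sqr_ge0.
Qed.

Lemma cert_He_negdef :
  negdef (He (block_mx (alpha *: Q + Amat w *m Q + Bmat w *m row2 0 (s * cert_W))
                       (Bmat w *m (- s)%:M)
                       (row2 0 (s * cert_W) + row2 0 (s * cert_Y)) (- s)%:M)).
Proof.
have s_gt0 := cert_s_gt0.
apply: negdef_He_block; last by rewrite He_scalar; apply: negdef_scalar1; lra.
  apply/matrixP => i j; rewrite mul_mx_scalar !mxE /cert_Y.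
  by case: i => [[|[|//]] ?] /=; ring.
rewrite closed_loop_mx2 He_mx2 !mxE /=.
have -> : alpha * s + - (s * m) = - s by ring.
have -> : alpha * - (s * m) + s * cert_q + (w ^+ 2 * s + alpha * - (s * m) - w ^+ 2 * 0) =
          s * cert_e by rewrite /cert_e; ring.
have -> : w ^+ 2 * - (s * m) + alpha * (s * cert_q) - w ^+ 2 * (s * cert_W) =
          - (s * (cert_e ^+ 2 + 1)) / 2.
  by rewrite /cert_W; field; rewrite gt_eqF.
have se_gt0 : 0 < s * (cert_e ^+ 2 + 1) by rewrite mulr_gt0 // ltr_wpDl ?sqr_ge0.
apply: negdef_mx2; first lra.
nra.
Qed.

Lemma cert_psd :
  psd (block_mx (ubar ^+ 2)%:M (row2 0 (s * cert_Y)) (row2 0 (s * cert_Y))^T Q).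
Proof.
have s_gt0 := cert_s_gt0.
apply: psd_block_schur; first by rewrite exprn_gt0.
set Y := row2 0 (s * cert_Y).
have -> : Q - (ubar ^+ 2)^-1 *: (Y^T *m Y) =
          mx2 s (- (s * m)) (- (s * m)) (s * (cert_q - cert_Y ^+ 2 / (cert_Y ^+ 2 + 1))).
  rewrite [LHS]mx2_eta !mxE !big_ord1 !mxE /= /cert_s.
  by congr mx2; field; rewrite !gt_eqF // ltr_wpDl ?sqr_ge0.
have f_lt1 : cert_Y ^+ 2 / (cert_Y ^+ 2 + 1) < 1.
  by rewrite ltr_pdivrMr ?mul1r ?ltrDl // ltr_wpDl ?sqr_ge0.
apply/posdef_psd/posdef_mx2 => //.
rewrite sqrrN exprMn expr2 -mulrA !ltr_pM2l //.
by move: (m ^+ 2) q_ge => m2; lra.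
Qed.

End Certificate.

Theorem proposition2 (R : realType) (g zc rbar vbar T ubar alpha : R) :
  0 < g -> 0 < zc -> 0 < rbar -> 0 < vbar -> 0 < T -> 0 < ubar ->
  vbar = omega g zc * rbar *
         ((expR (omega g zc * T) + expR (- (omega g zc * T))) / 2 + 1) /
         ((expR (omega g zc * T) - expR (- (omega g zc * T))) / 2) ->
  0 < alpha ->
  (feasible g zc rbar vbar T ubar alpha <-> omega g zc < alpha).
Proof.
move=> g_gt0 zc_gt0 rbar_gt0 _ T_gt0 ubar_gt0 vbarE alpha_gt0.
have w_gt0 : 0 < omega g zc by rewrite sqrtr_gt0 divr_gt0.
have xi_pos := xi_gt0 w_gt0 rbar_gt0 T_gt0 vbarE.
rewrite /feasible; move: (omega g zc) (xi _ _ _) w_gt0 xi_pos => w x w_gt0 x_gt0.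
split => [[q11 [q12 [q22 [W [Y [U [X [posQ _ negDelta negHe _]]]]]]]] | lt_w_alpha].
  exact: lt_alpha_of_lmi posQ negDelta negHe.
set s := cert_s w alpha T x ubar.
exists s, (- (s * (alpha + 1))), (s * cert_q w alpha T x).
exists (row2 0 (s * cert_W w alpha T x)), (row2 0 (s * cert_Y w alpha T x)), s, 0.
rewrite sub0r; split; by [apply: cert_Q_posdef | apply: cert_s_gt0 | apply: cert_Delta_negdef
  | apply: cert_He_negdef | apply: cert_psd].
Qed.
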